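(* Let $d=(d_1,\ldots,d_n)$ be a degree sequence with $\sum_{i} d_i = 2n$. Then $d$ has a bi-unicyclic realization if and only if $d_4 \geq 2$ and $d$ is not the sequence $(2,2,\ldots,2)$ of length $n$ with $n$ odd.
   Context: A degree sequence is a sequence $d=(d_1,\ldots,d_n)$ of integers with $d_i\in\{1,\ldots,n-1\}$ for all $i$, even volume $\sum_i d_i$, and ordered so that $d_1\ge d_2\ge\cdots\ge d_n$. A graph $G$ on vertex set $\{1,\ldots,n\}$ realizes $d$ if $\deg_G(i)=d_i$ for all $i$; all graphs are simple. A graph is bi-unicyclic if it is connected, bipartite, and contains exactly one cycle. *)

From mathcomp Require Import all_boot.
Set Implicit Arguments. Unset Strict Implicit. Unset Printing Implicit Defensive.

(* A degree sequence d = (d_1,...,d_n), n = size d: entries in {1,...,n-1},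
   even volume, nonincreasing.  d_i is [nth 0 d (i-1)]. *)
Definition degree_sequence (d : seq nat) : Prop :=
  all (fun x => 0 < x < size d) d /\ ~~ odd (sumn d) /\ sorted geq d.

Definition simple_graph n (e : rel 'I_n) : Prop := symmetric e /\ irreflexive e.

Definition deg n (e : rel 'I_n) (i : 'I_n) : nat := #|[set j | e i j]|.

Definition realizes (d : seq nat) (e : rel 'I_(size d)) : Prop :=
  forall i : 'I_(size d), deg e i = nth 0 d i.
Arguments realizes : clear implicits.

Definition connected_graph n (e : rel 'I_n) : Prop := forall i j, connect e i j.

Definition bipartite_graph n (e : rel 'I_n) : Prop :=
  exists c : 'I_n -> bool, forall i j, e i j -> c i != c j.

Definition is_cycle_seq n (e : rel 'I_n) (p : seq 'I_n) : bool :=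
  [&& 2 < size p, uniq p & cycle e p].

(* The edge set of the cycle (identifies rotations/reversals of the same cycle). *)
Definition cycle_edges n (p : seq 'I_n) : {set {set 'I_n}} :=
  [set [set x; next p x] | x in p].

Definition has_unique_cycle n (e : rel 'I_n) : Prop :=
  exists p, is_cycle_seq e p /\
    forall q, is_cycle_seq e q -> cycle_edges q = cycle_edges p.

Definition bi_unicyclic n (e : rel 'I_n) : Prop :=
  [/\ connected_graph e, bipartite_graph e & has_unique_cycle e].

From mathcomp Require Import all_boot zify.
Set Implicit Arguments. Unset Strict Implicit. Unset Printing Implicit Defensive.

(* A cycle of a bipartite graph has even length, hence at least four vertices,
   each of degree at least 2: so d_4 >= 2.  If every degree is 2, the cycle is
   closed under adjacency and, by connectivity, is the whole graph, so n is even.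

   Conversely, let k be the number of degrees >= 2 and m the largest even number
   <= k, so m >= 4.  Put a cycle on the vertices 0, ..., m-1 and hang every other
   vertex v from a parent of smaller index, vertex u receiving d_u - 2 (on the
   cycle) or d_u - 1 (off it) children; the condition sum d = 2n says that these
   numbers add up to exactly n - m.  When k is odd, vertex m hangs from vertex 0,
   which has degree >= 3 unless d is the excluded sequence.  The graph is connected
   and 2-colourable, and no cycle leaves the core: its largest off-core vertex
   would need two neighbours other than its parent. *)

Lemma next_neq_prev (T : eqType) (p : seq T) x :
  uniq p -> 2 < size p -> x \in p -> next p x != prev p x.
Proof.
move=> Up Sp xp; apply/eqP => next_prev_x.
have : next p (next p x) = x by rewrite next_prev_x next_prev.
have [i s def_p] := rot_to xp; rewrite -!(next_rot i Up) def_p.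
have : uniq (x :: s) by rewrite -def_p rot_uniq.
have : 2 < size (x :: s) by rewrite -def_p size_rot.
case: s {def_p} => [|a [|b t]] // _ /and3P[xNabt aNbt _] /=.
rewrite eqxx; case: eqP => [a_x | _ /=]; first by rewrite a_x mem_head in xNabt.
by rewrite eqxx => b_x; rewrite b_x !inE eqxx orbT in xNabt.
Qed.

Lemma path_colour_last (T : Type) (e : rel T) (c : T -> bool) x s :
  (forall x y, e x y -> c x != c y) -> path e x s ->
  c (last x s) = c x (+) odd (size s).
Proof.
move=> ce; elim: s x => [|y s IHs] x /=; first by rewrite addbF.
case/andP=> /ce cxy /IHs ->; move: cxy.
by case: (c x); case: (c y); case: (odd (size s)).
Qed.

Lemma cycle_colour_even (T : Type) (e : rel T) (c : T -> bool) p :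
  (forall x y, e x y -> c x != c y) -> cycle e p -> ~~ odd (size p).
Proof.
case: p => // x s ce /= /(path_colour_last ce).
rewrite last_rcons size_rcons /=.
by case: (c x); case: (odd (size s)).
Qed.

Section CyclesInGraphs.
Variables (n : nat) (e : rel 'I_n).
Hypothesis e_sym : symmetric e.

Lemma cycle_nbrs_sub p x : is_cycle_seq e p -> x \in p ->
  [set next p x; prev p x] \subset [set y | e x y].
Proof.
case/and3P=> _ _ Cp xp; apply/subsetP => y; rewrite !inE.
by case/orP=> /eqP ->; [apply: next_cycle | rewrite e_sym; apply: prev_cycle].
Qed.

Lemma card_cycle_nbrs p x : is_cycle_seq e p -> x \in p ->
  #|[set next p x; prev p x]| = 2.
Proof. by case/and3P=> Sp Up _ xp; rewrite cards2 next_neq_prev. Qed.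

Lemma deg_cycle_ge2 p x : is_cycle_seq e p -> x \in p -> 2 <= deg e x.
Proof.
by move=> Cp xp; rewrite -(card_cycle_nbrs Cp xp) subset_leq_card ?cycle_nbrs_sub.
Qed.

Lemma deg2_cycle_nbrs p x : is_cycle_seq e p -> x \in p -> deg e x = 2 ->
  [set y | e x y] = [set next p x; prev p x].
Proof.
move=> Cp xp dx; apply/eqP.
by rewrite eq_sym eqEcard cycle_nbrs_sub // (card_cycle_nbrs Cp xp) -[#|_|]/(deg e x) dx.
Qed.

Lemma connect_in_cycle p x y : cycle e p -> x \in p -> y \in p -> connect e x y.
Proof.
move=> Cp /rot_to[i s def_p]; rewrite -(mem_rot i) def_p => yp.
move: Cp; rewrite -(rot_cycle i) def_p /= rcons_path => /andP[xs _].
exact: path_connect xs y yp.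
Qed.

Lemma connected_2regular_cycle_spans p :
  connected_graph e -> (forall x, deg e x = 2) -> is_cycle_seq e p -> size p = n.
Proof.
move=> conn deg2 Cp; have [Sp Up _] := and3P Cp.
have cl_p : closed e (mem p).
  apply: intro_closed; first exact: sym_connect_sym.
  move=> x y exy xp; have : y \in [set y | e x y] by rewrite inE.
  rewrite (deg2_cycle_nbrs Cp xp (deg2 x)) !inE.
  by case/orP=> /eqP ->; rewrite ?mem_next ?mem_prev.
have [x0 x0p] : {x0 | x0 \in p}.
  by case: p Sp {Up Cp cl_p} => // x0 s; exists x0; rewrite mem_head.
have p_all y : y \in p by rewrite -(closed_connect cl_p (conn x0 y)).
by rewrite -(card_uniqP Up) -[RHS]card_ord; apply: eq_card.
Qed.

Lemma connected_by_descent (C : {pred 'I_n}) :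
  {in C &, forall x y, connect e x y} ->
  (forall x, x \notin C -> exists2 y, e x y & y < x) ->
  connected_graph e.
Proof.
move=> connC desc.
have to_C x : exists2 c, c \in C & connect e x c.
  have [k] := ubnP (val x); elim: k x => // k IH x /ltnSE lexk.
  have [xC | xNC] := boolP (x \in C); first by exists x.
  have [y exy ltyx] := desc x xNC; have [c cC ryc] := IH y (leq_trans ltyx lexk).
  by exists c; rewrite // (connect_trans (connect1 exy)).
move=> x y; have [cx cxC rx] := to_C x; have [cy cyC ry] := to_C y.
rewrite (connect_trans rx) // (connect_trans (connC _ _ cxC cyC)) //.
by rewrite (sym_connect_sym e_sym).
Qed.

Lemma cycle_in_core (C : {pred 'I_n}) q :
  (forall x y z, x \notin C -> e x y -> e x z -> y != z ->
     (y \notin C) && (x < y) || (z \notin C) && (x < z)) ->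
  is_cycle_seq e q -> {subset q <= C}.
Proof.
move=> tree Cq; have [Sq Uq Cyq] := and3P Cq.
apply/allP; apply/allPn => -[x0 x0q x0NC].
have := @arg_maxnP _ x0 (fun x => (x \in q) && (x \notin C)) val.
case=> [|x /andP[xq xNC] x_max]; first by rewrite x0q.
have [ne exn exp] : [/\ next q x != prev q x, e x (next q x) & e x (prev q x)].
  by rewrite next_neq_prev // next_cycle // e_sym prev_cycle.
case/orP: (tree _ _ _ xNC exn exp ne) => /andP[yNC ltxy].
  by have := x_max (next q x); rewrite mem_next xq yNC /= leqNgt ltxy => /(_ isT).
by have := x_max (prev q x); rewrite mem_prev xq yNC /= leqNgt ltxy => /(_ isT).
Qed.

Lemma cycle_nbr_edge (p : seq 'I_n) (x y : 'I_n) : uniq p -> x \in p ->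
  y \in [set next p x; prev p x] -> [set x; y] \in cycle_edges p.
Proof.
move=> Up xp; rewrite !inE => /orP[] /eqP ->; apply/imsetP; first by exists x.
by exists (prev p x); rewrite ?mem_prev // next_prev // setUC.
Qed.

Lemma induced_cycle_edges p q :
  is_cycle_seq e p -> {in p &, forall x y, e x y -> (y == next p x) || (y == prev p x)} ->
  is_cycle_seq e q -> {subset q <= p} -> cycle_edges q = cycle_edges p.
Proof.
move=> Cp ind_p Cq qp; have [_ Up _] := and3P Cp; have [Sq Uq _] := and3P Cq.
have nbrs x : x \in q -> [set next q x; prev q x] = [set next p x; prev p x].
  move=> xq; apply/eqP.
  rewrite eqEcard (card_cycle_nbrs Cq xq) (card_cycle_nbrs Cp (qp _ xq)) andbT.
  apply/subsetP => y y_nbr.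
  have exy : e x y by move/subsetP: (cycle_nbrs_sub Cq xq) => /(_ y y_nbr); rewrite inE.
  have yq : y \in q.
    by move: y_nbr; rewrite !inE => /orP[] /eqP ->; rewrite ?mem_next ?mem_prev.
  by rewrite !inE ind_p ?qp.
have pq : {subset p <= q}.
  have [x0 x0q] : exists x0, x0 \in q.
    by case: q Sq {Cq Uq qp nbrs} => // x0 s; exists x0; rewrite mem_head.
  move=> y; rewrite -(fconnect_cycle (cycle_next Up) (qp _ x0q)) => /connectP[s].
  elim: s x0 x0q => [|z s IHs] x xq /=; first by move=> _ ->.
  case/andP=> /eqP <-; apply: IHs; move: (nbrs x xq) => /setP/(_ (next p x)).
  by rewrite !inE eqxx /= => /orP[] /eqP ->; rewrite ?mem_next ?mem_prev.
apply/eqP; rewrite eqEsubset; apply/andP; split; apply/subsetP => _ /imsetP[x xz ->].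
  by apply: cycle_nbr_edge; rewrite ?qp // -nbrs // !inE eqxx.
by apply: cycle_nbr_edge; rewrite ?pq // nbrs ?pq // !inE eqxx.
Qed.

Lemma induced_cycle_unique p :
  is_cycle_seq e p -> {in p &, forall x y, e x y -> (y == next p x) || (y == prev p x)} ->
  (forall q, is_cycle_seq e q -> {subset q <= p}) -> has_unique_cycle e.
Proof.
move=> Cp ind_p in_p; exists p; split=> // q Cq.
exact: induced_cycle_edges Cp ind_p Cq (in_p q Cq).
Qed.

End CyclesInGraphs.

Lemma nth_sorted_geq (s : seq nat) i j :
  sorted geq s -> i <= j -> j < size s -> nth 0 s j <= nth 0 s i.
Proof.
move=> ss le_ij lt_js.
have := sorted_leq_nth (rev_trans leq_trans) leqnn 0 ss.
by apply; rewrite ?inE // (leq_ltn_trans le_ij).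
Qed.

Lemma sorted_geq_nth_lb (s r : seq nat) a j :
  sorted geq s -> uniq r -> {subset r <= [pred i | a <= nth 0 s i]} ->
  j < size r -> a <= nth 0 s j.
Proof.
move=> ss ur r_ge lt_jr; rewrite leqNgt; apply/negP => lt_ja.
suff : {subset r <= iota 0 j} by move/(uniq_leq_size ur); rewrite size_iota leqNgt lt_jr.
move=> i ir; have := r_ge i ir; rewrite inE mem_iota leq0n add0n => le_ai.
have lt_is : i < size s by rewrite ltnNge; apply: contraL le_ai => /(nth_default 0) ->; lia.
by rewrite ltnNge; apply: contraL le_ai => le_ji; have := nth_sorted_geq ss le_ji lt_is; lia.
Qed.

Lemma bi_unicyclic_long_cycle n (e : rel 'I_n) :
  bi_unicyclic e -> exists2 p, is_cycle_seq e p & 3 < size p.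
Proof.
case=> _ [c ce] [p [Cp _]]; exists p => //; have [Sp _ Cyp] := and3P Cp.
by have := cycle_colour_even ce Cyp; move: Sp; case: (size p) => [|[|[|[]]]].
Qed.

Lemma bi_unicyclic_nth3_ge2 d (e : rel 'I_(size d)) :
  sorted geq d -> simple_graph e -> realizes d e -> bi_unicyclic e -> 2 <= nth 0 d 3.
Proof.
move=> sd [e_sym _] de bu; have [p Cp Sp] := bi_unicyclic_long_cycle bu.
have [_ Up _] := and3P Cp.
apply: (sorted_geq_nth_lb (r := map val p)); rewrite ?(map_inj_uniq val_inj) ?size_map //.
by move=> _ /mapP[x xp ->]; rewrite inE -de (deg_cycle_ge2 e_sym Cp).
Qed.

Lemma bi_unicyclic_2regular_even d (e : rel 'I_(size d)) :
  simple_graph e -> realizes d e -> bi_unicyclic e -> d = nseq (size d) 2 ->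
  ~~ odd (size d).
Proof.
move=> [e_sym _] de bu d2; have [conn [c ce] [p [Cp _]]] := bu.
have deg2 x : deg e x = 2.
  by rewrite de; have := ltn_ord x; move: (nat_of_ord x) => i; rewrite {2}d2 nth_nseq => ->.
rewrite -(connected_2regular_cycle_spans e_sym conn deg2 Cp).
by apply: cycle_colour_even ce _; case/and3P: Cp.
Qed.

Lemma sumn_nth (s : seq nat) : sumn s = \sum_(0 <= i < size s) nth 0 s i.
Proof. by rewrite sumnE (big_nth 0). Qed.

Lemma next_iota0 m u : u < m -> next (iota 0 m) u = u.+1 %% m.
Proof.
move=> lt_um; have idx : index u (iota 0 m) = u.
  by rewrite -{1}(add0n u) -(nth_iota 0 0 lt_um) index_uniq ?size_iota ?iota_uniq.
case: m lt_um idx => // m lt_um idx; rewrite next_nth mem_iota lt_um idx /=.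
have [lt_um' | ge_um] := ltnP u m; first by rewrite nth_iota // modn_small.
by rewrite nth_default ?size_iota // (_ : u = m) ?modnn //; lia.
Qed.

Lemma count_orb_disjoint (T : eqType) (a b : pred T) s :
  {in s, forall x, ~~ (a x && b x)} ->
  count (fun x => a x || b x) s = count a s + count b s.
Proof.
move=> ab; rewrite -(count_predUI a b) (eq_in_count (a1 := predI a b) (a2 := pred0)).
  by rewrite count_pred0 addn0.
by move=> x /ab /negbTE.
Qed.

Lemma deg_nat_rel n (a : rel nat) (x : 'I_n) :
  deg (fun x y : 'I_n => a x y) x = count (a x) (iota 0 n).
Proof. by rewrite /deg cardsE cardE /enum_mem size_filter -val_enum_ord count_map enumT. Qed.

Section DegreeSequence.
Variable d : seq nat.
Hypothesis d_deg : degree_sequence d.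
Hypothesis d_sum : sumn d = 2 * size d.
Hypothesis d3_ge2 : 2 <= nth 0 d 3.
Hypothesis d_not_odd_cycle : ~ (d = nseq (size d) 2 /\ odd (size d)).

Local Notation n := (size d).

Definition nonleaves := find (fun x => x < 2) d.
Local Notation k := nonleaves.

Lemma d_mono i j : i <= j -> j < n -> nth 0 d j <= nth 0 d i.
Proof. by case: d_deg => _ [_ sd]; apply: nth_sorted_geq. Qed.

Lemma d_pos i : i < n -> 0 < nth 0 d i.
Proof. by case: d_deg => /allP d_range _ lt_in; case/andP: (d_range _ (mem_nth 0 lt_in)). Qed.

Lemma nonleaves_le : k <= n.
Proof. exact: find_size. Qed.

Lemma nonleaf_ge2 i : i < k -> 1 < nth 0 d i.
Proof. by move/(before_find 0); rewrite ltnNge => /negbFE. Qed.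

Lemma leaf_eq1 i : k <= i -> i < n -> nth 0 d i = 1.
Proof.
move=> le_ki lt_in; have lt_kn := leq_ltn_trans le_ki lt_in.
have : nth 0 d k < 2 by apply: (@nth_find _ 0 (fun x => x < 2)); rewrite has_find.
by have := d_mono le_ki lt_in; have := d_pos lt_in; lia.
Qed.

Lemma nonleaves_ge4 : 3 < k.
Proof.
rewrite ltnNge; apply/negP => le_k3.
have lt_3n : 3 < n by rewrite ltnNge; apply: contraTN d3_ge2 => /(nth_default 0) ->.
by have := leaf_eq1 le_k3 lt_3n; lia.
Qed.

Lemma odd_nonleaves_d0 : odd k -> 2 < nth 0 d 0.
Proof.
move=> odd_k; rewrite ltnNge; apply/negP => le_d0.
have d2 i : i < k -> nth 0 d i = 2.
  move=> lt_ik; have := nonleaf_ge2 lt_ik.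
  by have := d_mono (leq0n i) (leq_trans lt_ik nonleaves_le); lia.
have sum_d : sumn d = 2 * k + (n - k).
  rewrite sumn_nth (big_cat_nat (n := k)) ?nonleaves_le //=.
  rewrite (eq_big_nat _ _ (F2 := fun=> 2)) => [|i /andP[_ /d2] //].
  rewrite [X in _ + X](eq_big_nat _ _ (F2 := fun=> 1)) => [|i /andP[]]; last exact: leaf_eq1.
  by rewrite !sum_nat_const_nat; lia.
have e_kn : k = n by have := nonleaves_le; lia.
apply: d_not_odd_cycle; split; last by rewrite -e_kn.
apply: (@eq_from_nth _ 0); rewrite ?size_nseq // => i lt_in.
by rewrite nth_nseq lt_in d2 ?e_kn.
Qed.

Definition cycle_len := k - odd k.
Local Notation m := cycle_len.

Lemma cycle_len_facts : [/\ 3 < m, m <= k, k <= m.+1 & ~~ odd m].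
Proof.
have k4 := nonleaves_ge4.
have k5 : odd k -> 4 < k.
  by move=> odd_k; rewrite ltn_neqAle k4 andbT; apply: contraTneq odd_k => <-.
have even_m : ~~ odd m.
  by rewrite /cycle_len oddB; case: (odd k) => //; lia.
by split => //; rewrite /cycle_len; case: (odd k) k5 => [/(_ isT)|_]; lia.
Qed.

Lemma cycle_len_le_n : m <= n.
Proof. by case: cycle_len_facts => _ le_mk _ _; apply: leq_trans le_mk nonleaves_le. Qed.

Definition spare u := nth 0 d u - (if u < m then 2 else 1).
Definition parents := flatten [seq nseq (spare u) u | u <- iota 0 n].
Definition parent v := nth 0 parents (v - m).

Lemma spare_add u : u < n -> spare u + (if u < m then 2 else 1) = nth 0 d u.
Proof.
move=> lt_un; have [_ le_mk _ _] := cycle_len_facts; rewrite /spare subnK //.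
case: ifP => [lt_um|_]; last exact: d_pos.
exact: nonleaf_ge2 (leq_trans lt_um le_mk).
Qed.

Lemma size_parents : size parents = n - m.
Proof.
have le_mn := cycle_len_le_n.
have sum_base : \sum_(0 <= u < n) (if u < m then 2 else 1) = 2 * m + (n - m).
  rewrite (big_cat_nat (n := m)) //= (eq_big_nat _ _ (F2 := fun=> 2)) => [|u /andP[_ ->] //].
  rewrite [X in _ + X](eq_big_nat _ _ (F2 := fun=> 1)) => [|u /andP[le_mu _]].
    by rewrite !sum_nat_const_nat; lia.
  by rewrite ltnNge le_mu.
have : \sum_(0 <= u < n) nth 0 d u =
       \sum_(0 <= u < n) spare u + \sum_(0 <= u < n) (if u < m then 2 else 1).
  by rewrite -big_split; apply: eq_big_nat => u /andP[_ /spare_add].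
rewrite -sumn_nth d_sum sum_base size_flatten /shape -map_comp sumnE big_map /index_iota subn0.
by rewrite (eq_bigr _ (fun u _ => size_nseq _ _)); lia.
Qed.

Lemma count_parents u : u < n -> count_mem u parents = spare u.
Proof.
move=> lt_un; rewrite count_flatten -map_comp.
rewrite (eq_map (g := fun i => (i == u) * spare i)) => [|i]; last exact: count_nseq.
rewrite sumnE big_map (bigD1_seq u) ?mem_iota ?iota_uniq //= eqxx mul1n big1 ?addn0 //.
by move=> i /negbTE ->.
Qed.

Lemma mem_parents u : u \in parents -> u < k.
Proof.
case/flatten_mapP=> i; rewrite mem_iota add0n => /andP[_ lt_in].
rewrite mem_nseq => /andP[spare_i /eqP ->]; rewrite ltnNge; apply: contraL spare_i => le_ki.
have [_ le_mk _ _] := cycle_len_facts.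
by rewrite /spare leaf_eq1 // ifN // -leqNgt (leq_trans le_mk le_ki).
Qed.

Lemma parent_lt_nonleaves v : m <= v -> v < n -> parent v < k.
Proof.
move=> le_mv lt_vn; apply/mem_parents/mem_nth.
by rewrite size_parents; lia.
Qed.

Lemma parent_middle v : m <= v -> v < k -> parent v = 0.
Proof.
move=> le_mv lt_vk; have [m4 _ le_km _] := cycle_len_facts.
have e_vm : v = m by lia.
have odd_k : odd k.
  by move: le_mv lt_vk; rewrite /cycle_len; case: (odd k) => //=; rewrite subn0; lia.
have spare0 : 0 < spare 0.
  by rewrite /spare (leq_trans _ m4) //=; have := odd_nonleaves_d0 odd_k; lia.
rewrite /parent e_vm subnn /parents.
case: n cycle_len_le_n spare0 => [|n' _] spare0; first lia.
by rewrite /= nth_cat size_nseq spare0 nth_nseq spare0.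
Qed.

Lemma parent_lt v : m <= v -> v < n -> parent v < v.
Proof.
move=> le_mv lt_vn; have [m4 _ _ _] := cycle_len_facts.
have [lt_vk | le_kv] := ltnP v k; first by rewrite parent_middle //; lia.
exact: leq_trans (parent_lt_nonleaves le_mv lt_vn) le_kv.
Qed.

Definition ring := iota 0 m.
Definition ring_adj u v :=
  [&& u \in ring, v \in ring & (v == next ring u) || (u == next ring v)].
Definition adj u v :=
  [|| ring_adj u v, (m <= u) && (parent u == v) | (m <= v) && (parent v == u)].
Definition realization : rel 'I_n := fun x y => adj x y.

Lemma ring_adjE u : u \in ring ->
  ring_adj u =1 (fun v => (v == next ring u) || (v == prev ring u)).
Proof.
move=> ur v; have Ur : uniq ring := iota_uniq 0 m; rewrite /ring_adj ur /=.
apply/idP/idP => [/andP[vr /orP[-> // | /eqP ->]] | /orP[] /eqP ->].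
- by rewrite prev_next // eqxx orbT.
- by rewrite mem_next ur eqxx.
- by rewrite mem_prev ur next_prev // eqxx orbT.
Qed.

Lemma odd_next_ring u : u \in ring -> odd (next ring u) = ~~ odd u.
Proof.
have [_ _ _ even_m] := cycle_len_facts.
by rewrite mem_iota add0n => /andP[_ lt_um]; rewrite next_iota0 // odd_mod ?(negbTE even_m).
Qed.

Lemma adj_sym : symmetric adj.
Proof.
move=> u v; rewrite /adj [in RHS](orbC (_ && _)); congr (_ || _).
by rewrite /ring_adj andbCA orbC.
Qed.

Lemma adj_irrefl u : u < n -> adj u u = false.
Proof.
move=> lt_un; have [m4 _ _ _] := cycle_len_facts; rewrite /adj orbb; apply/norP; split.
  rewrite /ring_adj orbb mem_iota add0n; apply/negP => /and3P[lt_um _ /eqP].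
  rewrite next_iota0 //; have [lt_u1m | le_mu1] := ltnP u.+1 m.
    by rewrite modn_small //; lia.
  by rewrite (_ : u.+1 = m) ?modnn; lia.
by apply/andP => -[le_mu /eqP pu]; have := parent_lt le_mu lt_un; lia.
Qed.

Lemma realization_sym : symmetric realization.
Proof. by move=> x y; apply: adj_sym. Qed.

Lemma realization_simple : simple_graph realization.
Proof. by split=> [|x]; [apply: realization_sym | apply: adj_irrefl]. Qed.

Lemma count_ring_adj u : count (ring_adj u) (iota 0 n) = if u < m then 2 else 0.
Proof.
have [m4 _ _ _] := cycle_len_facts; have le_mn := cycle_len_le_n.
case: ifP => lt_um; last first.
  by rewrite (eq_count (a2 := pred0)) ?count_pred0 // => v; rewrite /ring_adj mem_iota lt_um.
have ur : u \in ring by rewrite mem_iota.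
have count1 v : v \in ring -> count (eq_op^~ v) (iota 0 n) = 1.
  by rewrite -[count _ _]/(count_mem v _) count_uniq_mem ?iota_uniq // !mem_iota; lia.
rewrite (eq_count (ring_adjE ur)) count_orb_disjoint => [|v _]; last first.
  apply/negP => /andP[/eqP -> ]; apply/negP.
  by rewrite next_neq_prev ?iota_uniq ?size_iota ?(ltnW m4).
by rewrite !count1 ?mem_next ?mem_prev.
Qed.

Lemma map_parent_iota : map parent (iota m (n - m)) = parents.
Proof.
rewrite -size_parents -[m]addn0 iotaDl -map_comp -[RHS](mkseq_nth 0).
by apply: eq_map => i; rewrite /parent /= addKn.
Qed.

Lemma count_parent_edge u : u < n ->
  count (fun v => (m <= u) && (parent u == v)) (iota 0 n) = (m <= u).
Proof.
move=> lt_un; case: (leqP m u) => [le_mu | _]; last by rewrite count_pred0.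
rewrite (eq_count (a2 := pred1 (parent u))) => [|v]; last by rewrite /= eq_sym.
rewrite count_uniq_mem ?iota_uniq // mem_iota /=.
by have := parent_lt le_mu lt_un; lia.
Qed.

Lemma count_child_edges u : u < n ->
  count (fun v => (m <= v) && (parent v == u)) (iota 0 n) = spare u.
Proof.
move=> lt_un; have le_mn := cycle_len_le_n.
rewrite -(subnKC le_mn) iotaD count_cat add0n.
rewrite (eq_in_count (a2 := pred0)) ?count_pred0 => [|v]; last first.
  by rewrite mem_iota add0n => /andP[_ lt_vm] /=; rewrite leqNgt lt_vm.
rewrite -count_parents // -map_parent_iota count_map; apply: eq_in_count => v.
by rewrite mem_iota => /andP[-> _].
Qed.

Lemma realization_realizes : realizes d realization.
Proof.
move=> x; have lt_xn := ltn_ord x; rewrite deg_nat_rel.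
rewrite /adj count_orb_disjoint => [|v]; last first.
  rewrite /ring_adj !mem_iota => _; apply/negP.
  case/andP=> /and3P[/andP[_ lt_xm] /andP[_ lt_vm] _].
  by rewrite leqNgt lt_xm leqNgt lt_vm.
rewrite count_orb_disjoint => [|v]; last first.
  rewrite mem_iota add0n => /andP[_ lt_vn]; apply/negP.
  case/andP=> /andP[le_mx /eqP pxv] /andP[le_mv /eqP pvx].
  have := parent_lt le_mx lt_xn; have := parent_lt le_mv lt_vn.
  by rewrite pxv pvx; lia.
rewrite count_ring_adj count_parent_edge // count_child_edges // -spare_add //.
by case: ltnP; lia.
Qed.

Definition core : seq 'I_n := [seq x <- enum 'I_n | val x \in ring].

Lemma mem_core x : (x \in core) = (val x < m).
Proof. by rewrite mem_filter mem_enum andbT mem_iota. Qed.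

Lemma uniq_core : uniq core.
Proof. exact/filter_uniq/enum_uniq. Qed.

Lemma map_val_core : map val core = ring.
Proof.
have le_mn := cycle_len_le_n.
rewrite /core -[filter _ _]/(filter (preim val (mem ring)) _) -filter_map val_enum_ord.
rewrite -(subnKC le_mn) iotaD filter_cat add0n (eq_in_filter (a2 := predT)) ?filter_predT.
  rewrite (eq_in_filter (a2 := pred0)) ?filter_pred0 ?cats0 // => v.
  rewrite mem_iota => /andP[le_mv _]; apply/negbTE.
  by rewrite -[mem ring v]/(v \in ring) mem_iota ltnNge le_mv andbF.
by move=> v vr; rewrite -[mem ring v]/(v \in ring) vr.
Qed.

Lemma val_next_core x : val (next core x) = next ring (val x).
Proof. by rewrite -map_val_core (next_map val_inj uniq_core). Qed.

Lemma val_prev_core x : val (prev core x) = prev ring (val x).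
Proof. by rewrite -map_val_core (prev_map val_inj uniq_core). Qed.

Lemma core_cycle : is_cycle_seq realization core.
Proof.
have [m4 _ _ _] := cycle_len_facts.
rewrite /is_cycle_seq -(size_map val) map_val_core size_iota (ltnW m4) uniq_core.
suff : cycle adj (map val core) by rewrite cycle_map; apply: sub_cycle.
rewrite map_val_core.
apply: (sub_in_cycle (P := mem ring)) (cycle_next (iota_uniq 0 m)); last exact/allP.
by move=> u v ur _ /eqP <-; rewrite /adj /ring_adj ur mem_next ur eqxx.
Qed.

Lemma core_induced :
  {in core &, forall x y, realization x y -> (y == next core x) || (y == prev core x)}.
Proof.
move=> x y xc yc; rewrite -!(inj_eq val_inj) val_next_core val_prev_core.
move: xc yc; rewrite !mem_core => lt_xm lt_ym.
rewrite /realization /adj leqNgt lt_xm leqNgt lt_ym !orbF ring_adjE //.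
by rewrite mem_iota.
Qed.

Lemma child_of_noncore (x y : 'I_n) : m <= x -> realization x y ->
  val y != parent x -> (y \notin core) && (x < y).
Proof.
move=> le_mx; rewrite /realization /adj /ring_adj mem_iota ltnNge le_mx /= eq_sym.
case/orP=> [/eqP -> | /andP[le_my /eqP <-] _]; first by rewrite eqxx.
by rewrite mem_core -leqNgt le_my parent_lt.
Qed.

Lemma cycles_in_core q : is_cycle_seq realization q -> {subset q <= core}.
Proof.
apply: (cycle_in_core realization_sym) => x y z.
rewrite mem_core -leqNgt => le_mx exy exz ne_yz.
have [e_py | ne_py] := eqVneq (val y) (parent x); last by rewrite child_of_noncore.
rewrite (child_of_noncore le_mx exz) ?orbT //.
by rewrite -e_py (inj_eq val_inj) eq_sym.
Qed.

Lemma realization_connected : connected_graph realization.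
Proof.
apply: (connected_by_descent realization_sym (C := mem core)).
  by move=> x y xc yc; apply: connect_in_cycle xc yc; case/and3P: core_cycle.
move=> x; rewrite mem_core -leqNgt => le_mx.
have lt_px : parent x < x by rewrite parent_lt.
exists (Ordinal (ltn_trans lt_px (ltn_ord x))) => //.
by rewrite /realization /adj /= eqxx le_mx orbT.
Qed.

(* Leaves hang from non-leaves, so two levels of colouring suffice. *)
Definition nonleaf_colour v := if v < m then odd v else true.
Definition colour v := if v < k then nonleaf_colour v else ~~ nonleaf_colour (parent v).

Lemma colour_ring u : u \in ring -> colour u = odd u.
Proof.
have [_ le_mk _ _] := cycle_len_facts.
rewrite mem_iota add0n => /andP[_ lt_um].
by rewrite /colour /nonleaf_colour lt_um (leq_trans lt_um le_mk).
Qed.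

Lemma colour_parent v : m <= v -> v < n -> colour v != colour (parent v).
Proof.
move=> le_mv lt_vn; have [m4 _ _ _] := cycle_len_facts.
rewrite /colour parent_lt_nonleaves //; case: ifP => [lt_vk | _]; last by case: nonleaf_colour.
by rewrite parent_middle // /nonleaf_colour ltnNge le_mv (leq_ltn_trans _ m4).
Qed.

Lemma realization_bipartite : bipartite_graph realization.
Proof.
exists (fun x => colour x) => x y; rewrite /realization /adj.
case/or3P => [/and3P[xr yr /orP[] /eqP ->] | /andP[le_mx /eqP <-] | /andP[le_my /eqP <-]].
- by rewrite !colour_ring ?mem_next // odd_next_ring //; case: odd.
- by rewrite !colour_ring ?mem_next // odd_next_ring //; case: odd.
- by rewrite colour_parent.
- by rewrite eq_sym colour_parent.
Qed.

Lemma degree_condition_realizable :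
  exists e : rel 'I_n, simple_graph e /\ realizes d e /\ bi_unicyclic e.
Proof.
exists realization; split; first exact: realization_simple.
split; first exact: realization_realizes.
split; [exact: realization_connected | exact: realization_bipartite |].
apply: (induced_cycle_unique realization_sym core_cycle); first exact: core_induced.
exact: cycles_in_core.
Qed.

End DegreeSequence.

Theorem theorem3p6 (d : seq nat) :
  degree_sequence d -> sumn d = 2 * size d ->
  ((exists e : rel 'I_(size d),
       simple_graph e /\ realizes d e /\ bi_unicyclic e)
   <->
   (2 <= nth 0 d 3 /\ ~ (d = nseq (size d) 2 /\ odd (size d)))).
Proof.
move=> d_deg d_sum; split=> [[e [e_simple [de bu]]] | [d3 not_odd_cycle]].
  split; first by apply: bi_unicyclic_nth3_ge2 de bu; case: d_deg => _ [].
  by case=> d2; apply/negP; apply: bi_unicyclic_2regular_even e_simple de bu d2.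
exact: degree_condition_realizable.
Qed.
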